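(* Let $w$ be a linearly recurrent infinite word over a finite alphabet $\Sigma$. Suppose there exists a positive constant $C$ such that for every sufficiently large $n$ one has $\sum_{m\leq n}\mathit{ASF}_{w}(m)\geq Cn^2$. Then $w$ is abelian-square rich.
   Context: For a word $u$ and letter $a$, $|u|_a$ is the number of occurrences of $a$ in $u$; the Parikh vector of $u$ over $\Sigma=\{a_1,\dots,a_\sigma\}$ is $P(u)=(|u|_{a_1},\dots,|u|_{a_\sigma})$. An abelian square is a word $v_1v_2$ with $P(v_1)=P(v_2)$. For a finite or infinite word $w$, $\mathit{ASF}_w(m)$ denotes the number of distinct factors of $w$ of length $m$ that are abelian squares. The factor complexity $p_w(n)$ is the number of distinct factors of $w$ of length $n$. The recurrence index $R_w(n)$ is the least $m$ such that every factor of $w$ of length $m$ contains all factors of $w$ of length $n$; $w$ is uniformly recurrent if $R_w(n)$ is defined for all $n$, and linearly recurrent if moreover $R_w(n)/n$ is bounded. An infinite word $w$ is abelian-square rich if there is a positive constant $C$ such that for all sufficiently large $n$, $\frac{1}{p_w(n)}\sum_{v}(\text{number of distinct abelian square factors of } v)\geq Cn^2$, where the sum ranges over the factors $v$ of $w$ of length $n$. *)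

From mathcomp Require Import all_boot all_order all_algebra.
From mathcomp Require Import boolp reals.
Set Implicit Arguments. Unset Strict Implicit. Unset Printing Implicit Defensive.
Import Order.TTheory GRing.Theory Num.Theory.

Section Words.
Variable T : finType.

Definition factor_at (w : nat -> T) (i n : nat) : seq T :=
  [seq w (i + k) | k <- iota 0 n].

Definition is_factor (w : nat -> T) (u : seq T) : Prop :=
  exists i, u = factor_at w i (size u).

Definition is_subfactor (u v : seq T) : Prop :=
  exists i, i + size u <= size v /\ u = take (size u) (drop i v).

Definition factors (w : nat -> T) (n : nat) : {set n.-tuple T} :=
  [set t : n.-tuple T | `[< is_factor w t >]].

Definition complexity (w : nat -> T) (n : nat) : nat := #|factors w n|.

Definition abelian_square (u : seq T) : Prop :=
  exists v1 v2, u = v1 ++ v2 /\ forall a : T, count_mem a v1 = count_mem a v2.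

Definition ASF (w : nat -> T) (m : nat) : nat :=
  #|[set t in factors w m | `[< abelian_square t >]]|.

Definition num_asq_factors (v : seq T) : nat :=
  \sum_(k < (size v).+1)
     #|[set t : k.-tuple T | `[< is_subfactor t v /\ abelian_square t >]]|.

Definition recurrent_within (w : nat -> T) (n m : nat) : Prop :=
  forall u, size u = m -> is_factor w u ->
  forall v, size v = n -> is_factor w v -> is_subfactor v u.

(* R_w(n) is defined for all n. *)
Definition uniformly_recurrent (w : nat -> T) : Prop :=
  forall n, exists m, recurrent_within w n m.

(* Moreover R_w(n)/n is bounded (n >= 1): R_w(n) <= K n, i.e. some m <= K n works. *)
Definition linearly_recurrent (w : nat -> T) : Prop :=
  uniformly_recurrent w /\
  exists K : nat, forall n, 0 < n -> exists m, m <= K * n /\ recurrent_within w n m.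

Local Open Scope ring_scope.

Definition abelian_square_rich (R : realType) (w : nat -> T) : Prop :=
  exists C : R, 0 < C /\ exists N : nat, forall n : nat, (N <= n)%N ->
    (complexity w n)%:R^-1 *
      (\sum_(t in factors w n) (num_asq_factors t)%:R) >= C * n%:R ^+ 2.

End Words.

From mathcomp Require Import all_boot all_order all_algebra.
From mathcomp Require Import boolp reals.
From mathcomp Require Import zify.
Import Order.TTheory GRing.Theory Num.Theory.
Set Implicit Arguments.
Unset Strict Implicit.
Unset Printing Implicit Defensive.
Local Open Scope ring_scope.

(** Let [L = K + 1], where [R_w(n) <= K n], and [n' = n %/ L]. A factor of
    length [n] contains a factor of length [R_w(n') <= K n' <= n], hence every
    factor of [w] of length at most [n'], and in particular all abelian squares
    of [w] of those lengths. So every factor of length [n] has at least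
    [\sum_(m <= n') ASF_w(m) >= C n'^2] abelian square factors, and
    [n <= 2 L n'] turns this into [C / (2L)^2 * n^2]. *)

Lemma is_subfactorP (T : finType) (u v : seq T) : reflect (is_subfactor u v) (infix u v).
Proof.
apply: (iffP idP) => [/infixP [s [s' ->]] | [i [_ ->]]].
  exists (size s); rewrite !size_cat addnA leq_addr; split=> //.
  by rewrite drop_size_cat // take_size_cat.
exact: infix_trans (infix_take _ _) (infix_drop _ _).
Qed.

Lemma leq_divn_double (m d : nat) : (0 < d -> 0 < m %/ d -> m <= 2 * d * (m %/ d))%N.
Proof. by move=> d_gt0 q_gt0; have := ltn_ceil m d_gt0; nia. Qed.

Lemma ler_mean_nat (R : numFieldType) (X : finType) (A : {set X}) (f : X -> nat) (a : nat) :
  (0 < #|A|)%N -> (forall x, x \in A -> a <= f x)%N ->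
  (a%:R : R) <= #|A|%:R^-1 * \sum_(x in A) (f x)%:R.
Proof.
move=> A_gt0 a_le; rewrite ler_pdivlMl ?ltr0n // -natrM -natr_sum ler_nat.
by rewrite -sum_nat_const; apply: leq_sum.
Qed.

Section Factors.
Variables (T : finType) (w : nat -> T).

Lemma size_factor_at i n : size (factor_at w i n) = n.
Proof. by rewrite size_map size_iota. Qed.

Lemma factor_at_is_factor i n : is_factor w (factor_at w i n).
Proof. by exists i; rewrite size_factor_at. Qed.

Lemma take_factor_at i n k : (k <= n)%N -> take k (factor_at w i n) = factor_at w i k.
Proof. by move=> k_le; rewrite -map_take take_iota (minn_idPl k_le). Qed.

Lemma complexity_gt0 n : (0 < complexity w n)%N.
Proof.
apply/card_gt0P; have sz : size (factor_at w 0 n) == n by rewrite size_factor_at.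
by exists (Tuple sz); rewrite inE; apply/asboolP; exists 0%N; rewrite /= size_factor_at.
Qed.

Lemma recurrent_within_infix n m s t :
  recurrent_within w n m -> (m <= size t)%N -> (size s <= n)%N ->
  is_factor w s -> is_factor w t -> infix s t.
Proof.
move=> rec m_le s_le [j s_eq] [i t_eq]; rewrite s_eq t_eq.
have long_in_t : infix (factor_at w i m) (factor_at w i (size t)).
  by rewrite -(take_factor_at i m_le) infix_take.
have short_in_long : infix (factor_at w j n) (factor_at w i m).
  by apply/is_subfactorP/rec; rewrite ?size_factor_at //; apply: factor_at_is_factor.
rewrite -(take_factor_at j s_le).
exact: infix_trans (infix_take _ _) (infix_trans short_in_long long_in_t).
Qed.

Lemma sum_ASF_le_num_asq_factors n t :
  (n <= size t)%N -> (forall s, size s <= n -> is_factor w s -> infix s t)%N ->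
  (\sum_(k < n.+1) ASF w k <= num_asq_factors t)%N.
Proof.
move=> n_le covers; rewrite /num_asq_factors (big_ord_widen (size t).+1 (ASF w)) // big_mkcond.
apply: leq_sum => k _; case: ifP => // k_le.
apply: subset_leq_card; apply/subsetP => s; rewrite !inE => /andP [s_f s_asq].
apply/asboolP; split; last exact/asboolP.
apply/is_subfactorP/covers; rewrite ?size_tuple //; exact/asboolP.
Qed.

End Factors.

Theorem lemma1 (R : realType) (T : finType) (w : nat -> T) :
  linearly_recurrent w ->
  (exists C : R, 0 < C /\ exists N : nat, forall n : nat, (N <= n)%N ->
     \sum_(m < n.+1) (ASF w m)%:R >= C * n%:R ^+ 2) ->
  abelian_square_rich R w.
Proof.
move=> [_ [K recK]] [C [C_gt0 [N sum_ASF_ge]]].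
pose L := K.+1.
exists (C / (2 * L)%:R ^+ 2); split; first by rewrite divr_gt0 // exprn_gt0 // ltr0n.
exists (L * N.+2)%N => n n_ge; set n' := (n %/ L)%N.
have n'_ge : (N.+2 <= n')%N by rewrite leq_divRL // mulnC.
have [m [m_le rec]] := recK n' (leq_trans (ltn0Sn _) n'_ge).
have m_le_n : (m <= n)%N by have := leq_divM n L; lia.
have t_rich t : t \in factors w n -> (\sum_(k < n'.+1) ASF w k <= num_asq_factors t)%N.
  rewrite inE => /asboolP t_f; apply: sum_ASF_le_num_asq_factors.
    by rewrite size_tuple leq_div.
  by move=> s s_le s_f; apply: recurrent_within_infix rec _ s_le s_f t_f; rewrite size_tuple.
apply: le_trans _ (ler_mean_nat R (complexity_gt0 w n) t_rich).
rewrite natr_sum; apply: le_trans (sum_ASF_ge _ (leq_trans (leqnSn _) (ltnW n'_ge))).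
rewrite mulrAC -mulrA; apply: ler_wpM2l; first exact: ltW.
rewrite ler_pdivrMr ?exprn_gt0 ?ltr0n //.
rewrite -!natrX -natrM ler_nat -expnMn leq_exp2r // mulnC.
by apply: leq_divn_double => //; apply: leq_trans (ltn0Sn _) n'_ge.
Qed.
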